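(* Let $a,c\ge 1$ be integers with $a\neq c$. Then $U=\{(a,0),(c,0)\}\subseteq\mathcal{B}$ is unavoidable.
   Context: The bicyclic inverse semigroup is $\mathcal{B}=\{(a,b)\in\mathbb{Z}\times\mathbb{Z}\mid a\ge 0,\ a+b\ge 0\}$ with multiplication $(a,b)(c,d)=(\max\{c+d,a\}-d,\ b+d)$. A subset $U\subseteq\mathcal{B}$ is called avoidable if $\mathcal{B}$ can be partitioned into two subsets $A$ and $B$ such that no element of $U$ can be written as a product $xy$ of two distinct elements $x\neq y$ both in $A$, or both in $B$. A set is unavoidable if it is not avoidable. *)

From Stdlib Require Import ZArith.
Open Scope Z_scope.

Definition inB (x : Z * Z) : Prop := 0 <= fst x /\ 0 <= fst x + snd x.

Definition bmul (x y : Z * Z) : Z * Z :=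
  (Z.max (fst y + snd y) (fst x) - snd y, snd x + snd y).

(* U is avoidable if B can be partitioned into two classes (given by a
   2-colouring `col` of the elements of B: class A = col true, class B = col false)
   such that no element of U is a product x y of two distinct elements of B
   lying in the same class. *)
Definition avoidable (U : Z * Z -> Prop) : Prop :=
  exists col : Z * Z -> bool,
    forall x y : Z * Z, inB x -> inB y -> x <> y -> col x = col y ->
      ~ U (bmul x y).

Definition unavoidable (U : Z * Z -> Prop) : Prop := ~ avoidable U.

(* The elements (n,0) with n >= 0 are idempotents multiplying as (m,0)(n,0) = (max m n, 0).
   Among (0,0), (a,0), (c,0) any two distinct ones multiply into U, and a 2-colouring
   must give two of these three elements the same colour. *)
From Stdlib Require Import ZArith Lia.
Open Scope Z_scope.

Lemma inB_idempotent (n : Z) : 0 <= n -> inB (n, 0).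
Proof. unfold inB; simpl; lia. Qed.

Lemma bmul_idempotent (m n : Z) : bmul (m, 0) (n, 0) = (Z.max m n, 0).
Proof. unfold bmul; simpl; f_equal; lia. Qed.

Lemma unavoidable_of_triangle (U : Z * Z -> Prop) (x y z : Z * Z) :
  inB x -> inB y -> inB z -> x <> y -> x <> z -> y <> z ->
  U (bmul x y) -> U (bmul x z) -> U (bmul y z) -> unavoidable U.
Proof.
  intros Bx By Bz Nxy Nxz Nyz Uxy Uxz Uyz [col Hcol].
  destruct (col x) eqn:Cx, (col y) eqn:Cy, (col z) eqn:Cz;
    solve [ apply (Hcol x y); congruence
          | apply (Hcol x z); congruence
          | apply (Hcol y z); congruence ].
Qed.

Theorem corollary5p2 (a c : Z) (ha : 1 <= a) (hc : 1 <= c) (hac : a <> c) :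
  unavoidable (fun u => u = (a, 0) \/ u = (c, 0)).
Proof.
  apply (unavoidable_of_triangle _ (0, 0) (a, 0) (c, 0));
    try (apply inB_idempotent; lia);
    try (intro E; injection E; lia);
    rewrite bmul_idempotent.
  - left; f_equal; lia.
  - right; f_equal; lia.
  - destruct (Z.max_spec a c) as [[_ ->] | [_ ->]]; auto.
Qed.
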